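(* Let $G=(V,E)$ be a finite simple graph with vertex set $V=\{v_1,\dots,v_n\}$, let $O$ be an orientation of $G$ and let $D:E\to\mathbb{N}$ assign a positive integer strength to every edge, so that $(G,D,O)$ is an augmented orientation. Let $k$ be the maximum augmented in-degree of a vertex in $(G,D,O)$. If the number of even Eulerian structures in $(G,D,O)$ is different from the number of odd Eulerian structures in $(G,D,O)$, then \[ AT(G)-1=\alpha(f_G)\le \alpha(W_{G,D})\le k . \]
   Context: For a nonzero polynomial $Q$, $\alpha(Q)$ denotes the minimum $k$ such that some monomial $m$ occurring in $Q$ with nonzero coefficient satisfies $\deg(m)=\deg(Q)$ and every variable has degree at most $k$ in $m$. The graph polynomial of $G$ is $f_G(x_1,\dots,x_n)=\prod_{i<j,\ \{v_i,v_j\}\in E}(x_i-x_j)$, and the Alon–Tarsi number is $AT(G)=\alpha(f_G)+1$. An augmented orientation $(G,D,O)$ consists of a graph $G$, an orientation $O$ of $G$, and $D:E\to\mathbb{N}$ assigning positive strengths to edges; the augmented in-degree (resp. out-degree) of a vertex is the sum of the strengths of its incoming (resp. outgoing) edges. The augmented graph polynomial is $W_{G,D}(x_1,\dots,x_n)=\prod_{i<j,\ e=\{v_i,v_j\}\in E}(x_i^{D(e)}-x_j^{D(e)})$. An Eulerian structure in $(G,D,O)$ is a subgraph $F$ of $G$ without isolated vertices (the empty graph is allowed) such that every vertex of $F$ has augmented in-degree equal to its augmented out-degree in $F$, with the orientation and strengths restricted from $O$ and $D$. An Eulerian structure is even (odd) if its number of edges is even (odd). *)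

From HB Require Import structures.
From mathcomp Require Import all_boot all_order all_algebra.
From mathcomp Require Import mpoly.
Set Implicit Arguments. Unset Strict Implicit. Unset Printing Implicit Defensive.
Import GRing.Theory.
Local Open Scope ring_scope.

(* Vertices are 'I_n (v_i = i).  A simple graph is a symmetric irreflexive
   relation [adj]; an orientation is a relation [o] with o i j meaning the
   edge {v_i,v_j} is oriented v_i -> v_j.  Strengths D : 'I_n -> 'I_n -> nat
   are read on edges (D symmetric, D e = D i j for e = {v_i,v_j}). *)

Definition simple_graph n (adj : rel 'I_n) :=
  (forall i, ~~ adj i i) /\ (forall i j, adj i j = adj j i).

Definition is_orientation n (adj o : rel 'I_n) :=
  forall i j, adj i j = (o i j || o j i) /\ ~~ (o i j && o j i).

Definition is_strength n (adj : rel 'I_n) (D : 'I_n -> 'I_n -> nat) :=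
  (forall i j, D i j = D j i) /\ (forall i j, adj i j -> (0 < D i j)%N).

Definition aug_indeg n (o : rel 'I_n) (D : 'I_n -> 'I_n -> nat) (v : 'I_n) : nat :=
  (\sum_(u < n | o u v) D u v)%N.

Definition max_aug_indeg n (o : rel 'I_n) D : nat :=
  (\max_(v < n) aug_indeg o D v)%N.

(* An Eulerian structure (a subgraph without isolated vertices) is determined
   by its edge set; we represent it by its set F of arcs (u,v) with o u v. *)
Definition eulerian_structure n (o : rel 'I_n) (D : 'I_n -> 'I_n -> nat)
  (F : {set 'I_n * 'I_n}) : bool :=
  (F \subset [set a | o a.1 a.2]) &&
  [forall v, (\sum_(a in F | a.2 == v) D a.1 a.2)%N
             == (\sum_(a in F | a.1 == v) D a.1 a.2)%N].

Definition num_even_ES n (o : rel 'I_n) D : nat :=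
  #|[set F : {set 'I_n * 'I_n} | eulerian_structure o D F && ~~ odd #|F|]|.
Definition num_odd_ES n (o : rel 'I_n) D : nat :=
  #|[set F : {set 'I_n * 'I_n} | eulerian_structure o D F && odd #|F|]|.

Definition graph_poly n (adj : rel 'I_n) : {mpoly int[n]} :=
  \prod_(i < n) \prod_(j < n | (i < j)%N && adj i j) ('X_i - 'X_j).

Definition aug_graph_poly n (adj : rel 'I_n) (D : 'I_n -> 'I_n -> nat)
  : {mpoly int[n]} :=
  \prod_(i < n) \prod_(j < n | (i < j)%N && adj i j)
     ('X_i ^+ D i j - 'X_j ^+ D i j).

(* alpha(Q): minimum over monomials m of Q of maximal total degree
   (deg Q = (msize Q).-1) of the largest exponent of m; i.e. the least k
   such that such a monomial has all exponents <= k.  (Meaningful for Q != 0.) *)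
Definition alpha n (Q : {mpoly int[n]}) : nat :=
  let s := [seq (\max_(i < n) (m : 'X_{1..n}) i)%N
           | m : 'X_{1..n} <- msupp Q & mdeg m == (msize Q).-1] in
  if s is x :: s' then foldr minn x s' else 0%N.

Definition AT n (adj : rel 'I_n) : nat := (alpha (graph_poly adj)).+1.

From HB Require Import structures.
From mathcomp Require Import all_boot all_order all_algebra.
From mathcomp Require Import mpoly.
Set Implicit Arguments. Unset Strict Implicit. Unset Printing Implicit Defensive.
Import GRing.Theory.
Local Open Scope ring_scope.

(* Expand the product of (x_v^D(e) - x_u^D(e)) over the arcs e = (u,v), which
   is W_{G,D} up to sign, by choosing the tail variable on a set J of arcs and
   the head variable on the others.  The choice J contributes
   (-1)^|J| x^(mu J), where mu J v is the out-weight of v in J plus its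
   in-weight outside J; so mu J is the in-degree monomial x^d exactly when J is
   an Eulerian structure.  Hence the coefficient of x^d in W is
   +-(#even - #odd) <> 0; as W is homogeneous, x^d is one of its top-degree
   monomials, and all its exponents are at most k.  Finally f_G divides W, and
   for homogeneous p every top-degree monomial of p * q lies above a monomial
   of p, so alpha(f_G) <= alpha(W). *)

Lemma foldr_minn_le (x y : nat) s : y \in x :: s -> (foldr minn x s <= y)%N.
Proof.
elim: s y => [|z s IH] y /=; first by rewrite inE => /eqP ->.
rewrite geq_min !inE => /predU1P[->|/predU1P[->|ys]].
- by rewrite IH ?mem_head ?orbT.
- by rewrite leqnn.
- by rewrite IH ?orbT // inE ys orbT.
Qed.

Lemma foldr_minn_mem (x : nat) s : foldr minn x s \in x :: s.
Proof.
elim: s => [|z s IH] /=; first exact: mem_head.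
rewrite /minn; case: ifP => _; first by rewrite !inE eqxx orbT.
by move: IH; rewrite !inE => /orP[]->; rewrite ?orbT.
Qed.

Section Alpha.
Variable n : nat.
Implicit Types (Q p q : {mpoly int[n]}) (m : 'X_{1..n}).

Definition max_exponent m : nat := \max_(i < n) m i.

Lemma alpha_le Q m : m \in msupp Q -> mdeg m = (msize Q).-1 ->
  (alpha Q <= max_exponent m)%N.
Proof.
move=> Qm degm; rewrite /alpha.
have : max_exponent m \in [seq max_exponent m | m <- msupp Q & mdeg m == (msize Q).-1].
  by apply: map_f; rewrite mem_filter degm eqxx.
by case: [seq _ | _ <- _ & _] => // x s; apply: foldr_minn_le.
Qed.

Lemma alpha_attained Q : Q != 0 ->
  exists2 m, (m \in msupp Q) && (mdeg m == (msize Q).-1) & alpha Q = max_exponent m.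
Proof.
move=> nzQ; rewrite /alpha.
have tops m : (m \in [seq m <- msupp Q | mdeg m == (msize Q).-1])
    = (mdeg m == (msize Q).-1) && (m \in msupp Q) by exact: mem_filter.
have : mlead Q \in [seq m <- msupp Q | mdeg m == (msize Q).-1].
  by rewrite tops mlead_supp // -mlead_deg // eqxx.
case: [seq m <- msupp Q | _] tops => [//|m s] tops _ /=.
have /mapP[m' m's ->] : foldr minn (max_exponent m) (map max_exponent s)
    \in map max_exponent (m :: s) by exact: foldr_minn_mem.
by exists m'; rewrite // andbC -tops.
Qed.

Lemma homog_mdeg Q m : Q \is homog mdeg -> m \in msupp Q -> mdeg m = (msize Q).-1.
Proof. by rewrite homog_msize => /dhomogP; apply. Qed.

Lemma alpha_le_homog Q m : Q \is homog mdeg -> m \in msupp Q ->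
  (alpha Q <= max_exponent m)%N.
Proof. by move=> homQ Qm; rewrite alpha_le ?(homog_mdeg homQ). Qed.

Lemma alpha_le_mulr p q : p \is homog mdeg -> p * q != 0 ->
  (alpha p <= alpha (p * q))%N.
Proof.
move=> homp nzpq; have [m /andP[pqm _] ->] := alpha_attained nzpq.
have /allpairsP[[m1 m2] /= [pm1 _ ->]] := msuppM_le pqm.
apply: leq_trans (alpha_le_homog homp pm1) _.
apply/bigmax_leqP => i _; apply: leq_trans (leq_bigmax i).
by rewrite mnmDE leq_addr.
Qed.

End Alpha.

Section Homogeneous.
Variables (n : nat) (R : nzRingType).

Lemma homog_bigprod (I : Type) (r : seq I) (P : pred I) (F : I -> {mpoly R[n]}) :
  (forall i, P i -> F i \is homog mdeg) -> \prod_(i <- r | P i) F i \is homog mdeg.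
Proof.
move=> homF; apply: (big_ind (fun p => p \is homog mdeg)) => //.
- by apply/homogP; exists 0%N; exact: dhomog1.
- by move=> p q /homogP[d homp] /homogP[e homq]; apply/homogP; exists (d + e)%N;
    exact: dhomogM.
Qed.

Lemma homog_XnB (i j : 'I_n) d : ('X_i ^+ d - 'X_j ^+ d : {mpoly R[n]}) \is homog mdeg.
Proof.
apply/homogP; exists d; rewrite !mpolyXn.
by apply: rpredB; rewrite dhomogX /= mdegMn mdeg1 mul1n.
Qed.

End Homogeneous.

Section GraphPolynomials.
Variables (n : nat) (adj : rel 'I_n) (D : 'I_n -> 'I_n -> nat).

Lemma graph_poly_homog : graph_poly adj \is homog mdeg.
Proof.
do 2![apply: homog_bigprod => ? _]; rewrite -[X in X - _]expr1 -[X in _ - X]expr1.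
exact: homog_XnB.
Qed.

Lemma aug_graph_poly_homog : aug_graph_poly adj D \is homog mdeg.
Proof. by do 2![apply: homog_bigprod => ? _]; exact: homog_XnB. Qed.

Lemma graph_poly_dvd_aug : exists q, aug_graph_poly adj D = graph_poly adj * q.
Proof.
exists (\prod_(i < n) \prod_(j < n | (i < j)%N && adj i j)
   \sum_(k < D i j) 'X_i ^+ ((D i j).-1 - k) * 'X_j ^+ k).
rewrite -big_split; apply: eq_bigr => i _.
by rewrite -big_split; apply: eq_bigr => j _; exact: subrXX.
Qed.

End GraphPolynomials.

Section ArcExpansion.
Variables (n : nat) (o : rel 'I_n) (D : 'I_n -> 'I_n -> nat).
Implicit Types (J S : {set 'I_n * 'I_n}) (v : 'I_n).

Definition arcs : {set 'I_n * 'I_n} := [set a | o a.1 a.2].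

Definition incident_weight (ends : 'I_n * 'I_n -> 'I_n) S v : nat :=
  (\sum_(a in S | ends a == v) D a.1 a.2)%N.

Local Notation in_weight := (incident_weight snd).
Local Notation out_weight := (incident_weight fst).

Lemma incident_weightE ends S v :
  incident_weight ends S v = (\sum_(a in S) (ends a == v) * D a.1 a.2)%N.
Proof.
by rewrite /incident_weight big_mkcondr; apply: eq_bigr => a _; case: (_ == _); rewrite ?mul1n.
Qed.

Lemma incident_weight_setID ends S J v : J \subset S ->
  incident_weight ends S v = (incident_weight ends J v + incident_weight ends (S :\: J) v)%N.
Proof. by move=> /setIidPr sJ; rewrite !incident_weightE (big_setID J) sJ. Qed.

Definition indeg_monomial : 'X_{1..n} := [multinom aug_indeg o D v | v < n].

Lemma aug_indegE v : aug_indeg o D v = in_weight arcs v.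
Proof.
rewrite /aug_indeg; transitivity (\sum_(u < n) \sum_(w < n | o u w && (w == v)) D u w)%N.
  rewrite big_mkcond; apply: eq_bigr => u _; case: ifP => ouv.
    by rewrite (big_pred1 v) // => w /=; case: eqP => [->|]; rewrite ?andbF ?andbT.
  by rewrite big_pred0 // => w /=; case: eqP => [->|]; rewrite ?ouv ?andbF.
by rewrite pair_big_dep; apply: eq_bigl => a; rewrite inE.
Qed.

Lemma max_exponent_indeg : max_exponent indeg_monomial = max_aug_indeg o D.
Proof. by apply: eq_bigr => v _; rewrite mnmE. Qed.

Definition arc_monomial J : 'X_{1..n} :=
  (\sum_(a in arcs) U_(if a \in J then a.1 else a.2) *+ D a.1 a.2)%MM.

Lemma arc_monomialE J v : J \subset arcs ->
  arc_monomial J v = (out_weight J v + in_weight (arcs :\: J) v)%N.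
Proof.
move=> /setIidPr sJ; rewrite !incident_weightE mnm_sumE (big_setID J) sJ.
congr (_ + _)%N; first by apply: eq_bigr => a aJ; rewrite aJ mulmnE mnm1E.
by apply: eq_bigr => a; rewrite inE => /andP[/negPf aJ _]; rewrite aJ mulmnE mnm1E.
Qed.

Lemma arc_monomial_eq_indeg J : J \subset arcs ->
  (arc_monomial J == indeg_monomial) = eulerian_structure o D J.
Proof.
move=> sJ; rewrite /eulerian_structure sJ /=.
have mJ v : (arc_monomial J v == indeg_monomial v) = (in_weight J v == out_weight J v).
  rewrite arc_monomialE // mnmE aug_indegE (incident_weight_setID _ _ sJ).
  by rewrite eqn_add2r eq_sym.
apply/eqP/forallP => [/mnmP E v|E]; first by rewrite -mJ E.
by apply/mnmP => v; apply/eqP; rewrite mJ; apply: E.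
Qed.

Definition arc_poly : {mpoly int[n]} :=
  \prod_(a in arcs) ('X_(a.2) ^+ D a.1 a.2 - 'X_(a.1) ^+ D a.1 a.2).

Lemma arc_poly_expand : arc_poly =
  \sum_(J : {set 'I_n * 'I_n} | J \subset arcs) (-1) ^+ #|J| *: 'X_[arc_monomial J].
Proof.
(* Extend the product to all pairs: off the arcs the factor is 0 + 1, so only
   sets J of arcs survive the distribution. *)
pose F a : {mpoly int[n]} := if a \in arcs then - 'X_(a.1) ^+ D a.1 a.2 else 0.
pose G a : {mpoly int[n]} := if a \in arcs then 'X_(a.2) ^+ D a.1 a.2 else 1.
rewrite /arc_poly big_mkcond (eq_bigr (fun a => F a + G a)); last first.
  by move=> a _; rewrite /F /G; case: (a \in arcs); rewrite ?add0r // addrC.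
rewrite bigA_distr (bigID (fun J => J \subset arcs)) /= [X in _ + X]big1 ?addr0.
  apply: eq_big => // J sJ.
  rewrite (eq_bigr (fun a => if a \in arcs then (if a \in J then -1 else 1) *:
      'X_(if a \in J then a.1 else a.2) ^+ D a.1 a.2 else 1)); last first.
    move=> a _; rewrite /F /G; case: (boolP (a \in J)) => [aJ|_].
      by rewrite (subsetP sJ a aJ) scaleN1r.
    by case: (a \in arcs); rewrite ?scale1r.
  rewrite -big_mkcond scaler_prod mprodXnE -big_mkcondr /=.
  rewrite (eq_bigl (mem J)) ?prodr_const // => a.
  by apply/andb_idl => /(subsetP sJ).
move=> J /subsetPn[a aJ aNarc]; rewrite (bigD1 a) //= aJ /F (negPf aNarc).
by rewrite mul0r.
Qed.

Lemma signed_count_ES :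
  \sum_(J | eulerian_structure o D J) (-1) ^+ #|J| =
  (num_even_ES o D)%:R - (num_odd_ES o D)%:R :> int.
Proof.
rewrite (bigID (fun J => odd #|J|)) /= addrC; congr (_ + _).
  rewrite (eq_bigr (fun _ => 1)) => [|J /andP[_ /negPf evenJ]]; last first.
    by rewrite -signr_odd evenJ.
  by rewrite -(eq_bigl _ _ (fun J => in_set _ J)) sumr_const.
rewrite (eq_bigr (fun _ => -1)) => [|J /andP[_ oddJ]]; last by rewrite -signr_odd oddJ.
by rewrite sumrN -(eq_bigl _ _ (fun J => in_set _ J)) sumr_const.
Qed.

Lemma arc_poly_coef_indeg :
  arc_poly@_indeg_monomial = (num_even_ES o D)%:R - (num_odd_ES o D)%:R.
Proof.
rewrite -signed_count_ES arc_poly_expand raddf_sum /=.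
rewrite (eq_bigr (fun J => if eulerian_structure o D J then (-1) ^+ #|J| else 0));
  last by move=> J sJ; rewrite mcoeffZ mcoeffX arc_monomial_eq_indeg //;
          case: ifP; rewrite ?mulr1 ?mulr0.
rewrite -big_mkcondr; apply: eq_bigl => J.
by apply/andb_idl => /andP[].
Qed.

End ArcExpansion.

Section Orientation.
Variables (n : nat) (adj o : rel 'I_n) (D : 'I_n -> 'I_n -> nat).
Hypotheses (adj_simple : simple_graph adj) (o_orients : is_orientation adj o).
Hypothesis D_sym : forall i j, D i j = D j i.

Lemma big_arcs (R : Type) (idx : R) (op : Monoid.com_law idx) (F : 'I_n * 'I_n -> R) :
  \big[op/idx]_(a in arcs o) F a =
  \big[op/idx]_(e : 'I_n * 'I_n | (e.1 < e.2)%N && adj e.1 e.2)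
     (if o e.1 e.2 then F e else F (e.2, e.1)).
Proof.
have [adj_irr _] := adj_simple.
rewrite (bigID (fun a : 'I_n * 'I_n => (a.1 < a.2)%N)) [RHS](bigID (fun e => o e.1 e.2)) /=.
congr (op _ _).
  apply: eq_big => [[i j]|[i j] /andP[]]; last by rewrite inE => /= ->.
  by rewrite inE /=; have [-> _] := o_orients i j; case: (o i j); rewrite ?andbF ?andbT.
rewrite (reindex_inj (h := fun a : 'I_n * 'I_n => (a.2, a.1))) /=; last first.
  by move=> [? ?] [? ?] [-> ->].
apply: eq_big => [[i j]|[i j]]; last first.
  rewrite inE => /andP[/= oji _]; have [_] := o_orients i j.
  by case: (o i j); rewrite //= oji.
have [adjE /negP noboth] := o_orients i j; rewrite inE /=.
case: (ltngtP i j) => [ij|ji|/val_inj eij]; rewrite ?adjE.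
- by case: (o i j) (o j i) noboth => [] [] //; rewrite andbF.
- by rewrite andbF; case: (o i j).
- by subst j; move: (adj_irr i); rewrite adjE; case: (o i i).
Qed.

Lemma arc_poly_sign : exists k, arc_poly o D = (-1) ^+ k * aug_graph_poly adj D.
Proof.
rewrite /arc_poly big_arcs /aug_graph_poly pair_big_dep /=.
rewrite (eq_bigr (fun e => (if o e.1 e.2 then -1 else 1) *
    ('X_(e.1) ^+ D e.1 e.2 - 'X_(e.2) ^+ D e.1 e.2))); last first.
  by move=> [i j] _ /=; case: (o i j); rewrite ?mulN1r ?mul1r ?opprB // D_sym.
rewrite big_split /= -big_mkcondr prodr_const.
by eexists.
Qed.

Lemma aug_graph_poly_coef_indeg : num_even_ES o D <> num_odd_ES o D ->
  (aug_graph_poly adj D)@_(indeg_monomial o D) != 0.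
Proof.
move=> even_neq_odd; have [k arc_polyE] := arc_poly_sign.
have : (arc_poly o D)@_(indeg_monomial o D) != 0.
  by rewrite arc_poly_coef_indeg subr_eq0 Num.Theory.eqr_nat; apply/eqP.
by rewrite arc_polyE -signr_odd mulr_sign; case: (odd k); rewrite ?mcoeffN ?oppr_eq0.
Qed.

End Orientation.

Unset Implicit Arguments.

Theorem lemma2p7 (n : nat) (adj o : rel 'I_n) (D : 'I_n -> 'I_n -> nat) :
  simple_graph adj -> is_orientation adj o -> is_strength adj D ->
  num_even_ES o D <> num_odd_ES o D ->
  [/\ (AT adj - 1)%N = alpha (graph_poly adj),
      (alpha (graph_poly adj) <= alpha (aug_graph_poly adj D))%N
    & (alpha (aug_graph_poly adj D) <= max_aug_indeg o D)%N].
Proof.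
move=> adj_simple o_orients [D_sym _] even_neq_odd.
have W_coef := aug_graph_poly_coef_indeg adj_simple o_orients D_sym even_neq_odd.
have W_nz : aug_graph_poly adj D != 0.
  by apply: contraNneq W_coef => ->; rewrite mcoeff0.
split.
- by rewrite /AT subn1.
- have [q W_eq] := graph_poly_dvd_aug adj D.
  by rewrite W_eq alpha_le_mulr ?graph_poly_homog // -W_eq.
- rewrite -max_exponent_indeg.
  by apply: alpha_le_homog (aug_graph_poly_homog adj D) _; rewrite mcoeff_msupp.
Qed.
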